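(* Let $\mathbf Y_i\in\mathbb R^k$ be a random vector whose law is absolutely continuous w.r.t. Lebesgue measure, has connected support and finite first moments, and let $(\alpha_0,\beta_0)$ be the population parameters (satisfying the subgradient conditions below). Let $\sigma>0$, $(\alpha,\beta)\in\mathbb R\times\mathbb R^{k-1}$, and let $b_i, W_i$ be as in the context. Then (b) $\sigma E\Big[\log\frac{f_{\boldsymbol\tau}(\mathbf Y_i\mid\alpha,\beta,\sigma)}{f_{\boldsymbol\tau}(\mathbf Y_i\mid\alpha_0,\beta_0,\sigma)}\Big]=E\big[-(W_i-b_i)1_{(b_i<W_i<0)}\big]+E\big[(W_i-b_i)1_{(0<W_i<b_i)}\big]$, and consequently (a) $E\Big[\log\frac{f_{\boldsymbol\tau}(\mathbf Y_i\mid\alpha,\beta,\sigma)}{f_{\boldsymbol\tau}(\mathbf Y_i\mid\alpha_0,\beta_0,\sigma)}\Big]\le 0$.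
   Context: Location case. Fix $\tau\in(0,1)$, $\mathbf u\in\mathcal S^{k-1}$, $\Gamma_{\mathbf u}$ a $k\times(k-1)$ matrix with $[\mathbf u\ \Gamma_{\mathbf u}]$ orthonormal, $\mathbf Y^\perp_{\mathbf u i}=\Gamma_{\mathbf u}'\mathbf Y_i$, $\rho_\tau(x)=x(\tau-1_{(x<0)})$, $f_{\boldsymbol\tau}(\mathbf Y\mid\alpha,\beta,\sigma)=\frac{\tau(1-\tau)}{\sigma}\exp\big(-\frac1\sigma\rho_\tau(\mathbf u'\mathbf Y-\alpha-\beta'\Gamma_{\mathbf u}'\mathbf Y)\big)$. $b_i=(\alpha-\alpha_0)+(\beta-\beta_0)'\mathbf Y^\perp_{\mathbf u i}$ and $W_i=(\mathbf u'-\beta_0'\Gamma_{\mathbf u}')\mathbf Y_i-\alpha_0$. The population parameters $(\alpha_0,\beta_0)$ satisfy $\Pr(W_i\le 0)=\tau$ and $E[\mathbf Y^\perp_{\mathbf u i}1_{(W_i\le0)}]=\tau E[\mathbf Y^\perp_{\mathbf u i}]$. *)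

From HB Require Import structures.
From mathcomp Require Import all_boot all_order all_algebra.
From mathcomp Require Import all_classical all_reals all_analysis.
Set Implicit Arguments. Unset Strict Implicit. Unset Printing Implicit Defensive.
Import Order.TTheory GRing.Theory Num.Theory.
Import numFieldNormedType.Exports.
Local Open Scope classical_set_scope.
Local Open Scope ring_scope.

Definition rho_tau {R : realType} (tau x : R) : R := x * (tau - ((x < 0)%R : bool)%:R).

Definition Yperp {R : realType} {n : nat} (Gam : 'M[R]_(n.+1, n))
  (y : 'cV[R]_n.+1) : 'cV[R]_n := Gam^T *m y.

Definition f_tau {R : realType} {n : nat} (tau : R) (u : 'cV[R]_n.+1)
  (Gam : 'M[R]_(n.+1, n)) (y : 'cV[R]_n.+1) (alpha : R) (beta : 'cV[R]_n)
  (sigma : R) : R :=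
  tau * (1 - tau) / sigma *
  expR (- (rho_tau tau ((u^T *m y) 0 0 - alpha - (beta^T *m Yperp Gam y) 0 0))
        / sigma).

Definition b_fun {R : realType} {n : nat} (Gam : 'M[R]_(n.+1, n))
  (alpha alpha0 : R) (beta beta0 : 'cV[R]_n) (y : 'cV[R]_n.+1) : R :=
  (alpha - alpha0) + ((beta - beta0)^T *m Yperp Gam y) 0 0.

Definition W_fun {R : realType} {n : nat} (u : 'cV[R]_n.+1)
  (Gam : 'M[R]_(n.+1, n)) (alpha0 : R) (beta0 : 'cV[R]_n) (y : 'cV[R]_n.+1) : R :=
  ((u^T - beta0^T *m Gam^T) *m y) 0 0 - alpha0.

Definition box {R : realType} {k : nat} (a b : 'cV[R]_k) : set 'cV[R]_k :=
  [set y | forall i : 'I_k, a i 0 <= y i 0 <= b i 0].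
Definition box_vol {R : realType} {k : nat} (a b : 'cV[R]_k) : R :=
  \prod_(i < k) (b i 0 - a i 0).

Definition leb_null {R : realType} {k : nat} (N : set 'cV[R]_k) : Prop :=
  forall e : R, 0 < e -> exists a b : nat -> 'cV[R]_k,
    (forall m (i : 'I_k), a m i 0 <= b m i 0) /\
    N `<=` \bigcup_m box (a m) (b m) /\
    (forall M : nat, \sum_(m < M) box_vol (a m) (b m) <= e).

Definition law_abs_cont {d : measure_display} {T : measurableType d}
  {R : realType} {k : nat} (P : probability T R) (Y : T -> 'cV[R]_k) : Prop :=
  forall N : set 'cV[R]_k, leb_null N -> P.-negligible (Y @^-1` N).

Definition law_support {d : measure_display} {T : measurableType d}
  {R : realType} {k : nat} (P : probability T R) (Y : T -> 'cV[R]_k)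
  : set 'cV[R]_k :=
  [set y | forall r : R, 0 < r -> (0 < P (Y @^-1` ball y r))%E].

From HB Require Import structures.
From mathcomp Require Import all_boot all_order all_algebra.
From mathcomp Require Import all_classical all_reals all_analysis.
From mathcomp Require Import ring lra.
Import Order.TTheory GRing.Theory Num.Theory.
Import numFieldNormedType.Exports.
Import measurable_realfun.
Local Open Scope classical_set_scope.
Local Open Scope ring_scope.

Set Implicit Arguments. Unset Strict Implicit. Unset Printing Implicit Defensive.

(* The log-likelihood ratio is (rho_tau W - rho_tau (W - b)) / sigma, and pointwise
     rho_tau w - rho_tau (w - b)
       = A + B + b 1{w = 0, b < 0} - b (1{w <= 0} - tau),
   where A = -(w - b) 1{b < w < 0} <= 0 and B = (w - b) 1{0 < w < b} <= 0.
   The subgradient conditions say that the quantile score 1{W <= 0} - tau is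
   orthogonal to 1 and to the coordinates of Y^perp, hence to the affine b.
   The event {W = 0} is null: W is an affine form of Y, nonconstant because
   P(W <= 0) = tau lies strictly between 0 and 1, and the hyperplanes of R^k are
   Lebesgue-null. *)

Local Notation ind P := ((P)%R : bool)%:R.

Lemma f_tau_residual (R : realType) (n : nat) (u : 'cV[R]_n.+1) (Gam : 'M[R]_(n.+1, n))
    (alpha alpha0 : R) (beta beta0 : 'cV[R]_n) (y : 'cV[R]_n.+1) :
  (u^T *m y) 0 0 - alpha - (beta^T *m Yperp Gam y) 0 0 =
  W_fun u Gam alpha0 beta0 y - b_fun Gam alpha alpha0 beta beta0 y.
Proof.
have subE (A B : 'M[R]_1) : (A - B) 0 0 = A 0 0 - B 0 0 by rewrite !mxE.
rewrite /W_fun /b_fun /Yperp mulmxBl -mulmxA linearB /= mulmxBl !subE; lra.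
Qed.

Lemma b_fun_Yperp (R : realType) (n : nat) (Gam : 'M[R]_(n.+1, n)) (alpha alpha0 : R)
    (beta beta0 : 'cV[R]_n) (y : 'cV[R]_n.+1) :
  b_fun Gam alpha alpha0 beta beta0 y =
  (alpha - alpha0) + \sum_j (beta - beta0) j 0 * Yperp Gam y j 0.
Proof. by rewrite /b_fun mxE; under eq_bigr do rewrite mxE. Qed.

Lemma Yperp_row (R : realType) (n : nat) (Gam : 'M[R]_(n.+1, n)) (y : 'cV[R]_n.+1) j :
  Yperp Gam y j 0 = (row j Gam^T *m y) 0 0.
Proof. by rewrite /Yperp -row_mul [RHS]mxE. Qed.

Lemma ln_f_tau_ratio (R : realType) (n : nat) (tau : R) (u : 'cV[R]_n.+1)
    (Gam : 'M[R]_(n.+1, n)) (alpha alpha0 : R) (beta beta0 : 'cV[R]_n) (sigma : R)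
    (y : 'cV[R]_n.+1) :
  0 < tau < 1 -> 0 < sigma ->
  ln (f_tau tau u Gam y alpha beta sigma / f_tau tau u Gam y alpha0 beta0 sigma) =
  (rho_tau tau (W_fun u Gam alpha0 beta0 y)
   - rho_tau tau (W_fun u Gam alpha0 beta0 y - b_fun Gam alpha alpha0 beta beta0 y)) / sigma.
Proof.
move=> /andP[tau0 tau1] sigma0.
have b0 : b_fun Gam alpha0 alpha0 beta0 beta0 y = 0.
  by rewrite /b_fun !subrr trmx0 mul0mx mxE add0r.
rewrite /f_tau (f_tau_residual u Gam alpha alpha0 beta beta0).
rewrite (f_tau_residual u Gam alpha0 alpha0 beta0 beta0) b0 subr0.
have K0 : tau * (1 - tau) / sigma != 0.
  by rewrite mulf_neq0 ?invr_eq0 ?mulf_neq0 // gt_eqF // subr_gt0.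
rewrite invfM mulrACA divff // mul1r -expRB expRK.
by field; rewrite gt_eqF.
Qed.

Lemma rho_tau_sub (R : realType) (tau w b : R) :
  rho_tau tau w - rho_tau tau (w - b) =
    - (w - b) * ind ((b < w) && (w < 0)) + (w - b) * ind ((0 < w) && (w < b))
    + b * ind ((w == 0) && (b < 0)) - b * (ind (w <= 0) - tau).
Proof.
rewrite /rho_tau subr_lt0.
case: (ltrgtP w 0) => [w0|w0|->] /=.
- by case: (ltrP b w) => h1; case: (ltrP w b) => h2 /=; lra.
- by case: (ltrP b w) => h1; case: (ltrP w b) => h2 /=; lra.
by case: (ltrgtP 0 b) => [|| <-] /=; lra.
Qed.

Section integral_EFin.
Context d (T : measurableType d) (R : realType) (mu : {measure set T -> \bar R}).
Implicit Types (f g : T -> R) (k : R).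

Lemma integrable_EFinD f g : mu.-integrable setT (EFin \o f) ->
  mu.-integrable setT (EFin \o g) -> mu.-integrable setT (EFin \o (fun t => f t + g t)).
Proof. by move=> If Ig; rewrite (_ : _ \o _ = (EFin \o f) \+ (EFin \o g))%E; [exact: integrableD|]. Qed.

Lemma integrable_EFinZl k f : mu.-integrable setT (EFin \o f) ->
  mu.-integrable setT (EFin \o (fun t => k * f t)).
Proof. by move=> If; rewrite (_ : _ \o _ = (fun t => k%:E * (EFin \o f) t))%E; [exact: integrableZl|]. Qed.

Lemma integrable_EFinN f : mu.-integrable setT (EFin \o f) ->
  mu.-integrable setT (EFin \o (fun t => - f t)).
Proof.
move=> If; rewrite (_ : _ \o _ = EFin \o (fun t => -1 * f t)); first exact: integrable_EFinZl.
by apply/funext => t /=; rewrite mulN1r.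
Qed.

Lemma integrable_EFinB f g : mu.-integrable setT (EFin \o f) ->
  mu.-integrable setT (EFin \o g) -> mu.-integrable setT (EFin \o (fun t => f t - g t)).
Proof. by move=> If Ig; apply/integrable_EFinD/integrable_EFinN. Qed.

Lemma integrable_EFin_sum (I : finType) (F : I -> T -> R) :
  (forall i, mu.-integrable setT (EFin \o F i)) ->
  mu.-integrable setT (EFin \o (fun t => \sum_i F i t)).
Proof.
move=> IF; rewrite (_ : _ \o _ = fun t => \sum_i (F i t)%:E)%E; last first.
  by apply/funext => t; rewrite /= sumEFin.
by apply: integrable_sum => // i _; exact: IF.
Qed.

Lemma integrable_EFin_mul_indic f (P : T -> bool) : mu.-integrable setT (EFin \o f) ->
  measurable_fun setT P -> mu.-integrable setT (EFin \o (fun t => f t * (P t)%:R)).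
Proof.
move=> If mP; have mf := measurable_int _ If.
apply: le_integrable If => [//||t _ /=].
  apply/measurable_EFinP/measurable_funM; first exact/measurable_EFinP.
  by apply: (measurableT_comp (f := fun b : bool => b%:R : R)) mP => _ A _; rewrite setTI.
by rewrite lee_fin normrM ler_piMr //; case: (P t); rewrite ?normr1 ?normr0.
Qed.

Lemma integral_EFinD f g : mu.-integrable setT (EFin \o f) ->
  mu.-integrable setT (EFin \o g) ->
  (\int[mu]_t (f t + g t)%:E = \int[mu]_t (f t)%:E + \int[mu]_t (g t)%:E)%E.
Proof. by move=> If Ig; under eq_integral do rewrite EFinD; exact: integralD_EFin. Qed.

Lemma integral_EFinB f g : mu.-integrable setT (EFin \o f) ->
  mu.-integrable setT (EFin \o g) ->
  (\int[mu]_t (f t - g t)%:E = \int[mu]_t (f t)%:E - \int[mu]_t (g t)%:E)%E.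
Proof. by move=> If Ig; under eq_integral do rewrite EFinB; exact: integralB_EFin. Qed.

Lemma integral_EFinZl k f : mu.-integrable setT (EFin \o f) ->
  (\int[mu]_t (k * f t)%:E = k%:E * \int[mu]_t (f t)%:E)%E.
Proof. by move=> If; under eq_integral do rewrite EFinM; exact: integralZl. Qed.

Lemma integral_EFin_sum (I : finType) (F : I -> T -> R) :
  (forall i, mu.-integrable setT (EFin \o F i)) ->
  (\int[mu]_t (\sum_i F i t)%:E = \sum_i \int[mu]_t (F i t)%:E)%E.
Proof.
move=> IF; under eq_integral do rewrite -sumEFin.
by rewrite integral_sum // => i; exact: IF.
Qed.

Lemma integral_EFin_le0 f : (forall t, f t <= 0) -> (\int[mu]_t (f t)%:E <= 0)%E.
Proof.
move=> f0; under eq_integral do rewrite -[f _]opprK EFinN.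
rewrite integral_ge0N => [|t _]; last by rewrite lee_fin oppr_ge0.
by rewrite oppe_le0 integral_ge0 // => t _; rewrite lee_fin oppr_ge0.
Qed.

End integral_EFin.

Section expected_check_loss_difference.
Context d (T : measurableType d) (R : realType) (P : probability T R).
Variables (tau : R) (W b : T -> R).
Hypotheses (IW : P.-integrable setT (EFin \o W)) (Ib : P.-integrable setT (EFin \o b)).
Hypothesis W0_null : P.-negligible [set t | W t = 0].
Hypothesis b_orth : (\int[P]_t (b t * (ind (W t <= 0) - tau))%:E = 0)%E.

Let mW : measurable_fun setT W. Proof. exact/measurable_EFinP/(measurable_int P). Qed.
Let mb : measurable_fun setT b. Proof. exact/measurable_EFinP/(measurable_int P). Qed.
Let m0 : measurable_fun setT (fun _ : T => 0 : R). Proof. exact: measurable_cst. Qed.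

Let IA : P.-integrable setT
  (EFin \o (fun t => - (W t - b t) * ind ((b t < W t) && (W t < 0)))).
Proof.
apply/integrable_EFin_mul_indic; first exact/integrable_EFinN/integrable_EFinB.
by apply: measurable_and; apply: measurable_fun_ltr.
Qed.

Let IB : P.-integrable setT
  (EFin \o (fun t => (W t - b t) * ind ((0 < W t) && (W t < b t)))).
Proof.
apply/integrable_EFin_mul_indic; first exact/integrable_EFinB.
by apply: measurable_and; apply: measurable_fun_ltr.
Qed.

Let IZ : P.-integrable setT (EFin \o (fun t => b t * ind ((W t == 0) && (b t < 0)))).
Proof.
apply/integrable_EFin_mul_indic => //.
under eq_fun do rewrite eq_le.
by do 2?apply: measurable_and; (apply: measurable_fun_ler || apply: measurable_fun_ltr).
Qed.

Let IC : P.-integrable setT (EFin \o (fun t => b t * (ind (W t <= 0) - tau))).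
Proof.
under eq_fun do rewrite mulrBr [b _ * tau]mulrC.
apply: integrable_EFinB; last exact: integrable_EFinZl.
by apply/integrable_EFin_mul_indic => //; apply: measurable_fun_ler.
Qed.

Lemma integrable_rho_tau_sub : P.-integrable setT
  (EFin \o (fun t => rho_tau tau (W t) - rho_tau tau (W t - b t))).
Proof.
under eq_fun do rewrite rho_tau_sub.
by apply: integrable_EFinB => //; apply: integrable_EFinD => //; exact: integrable_EFinD.
Qed.

Lemma integral_rho_tau_sub :
  (\int[P]_t (rho_tau tau (W t) - rho_tau tau (W t - b t))%:E =
   \int[P]_t (- (W t - b t) * ind ((b t < W t) && (W t < 0)))%:E
   + \int[P]_t ((W t - b t) * ind ((0 < W t) && (W t < b t)))%:E)%E.
Proof.
have IAB := integrable_EFinD IA IB.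
under eq_integral do rewrite rho_tau_sub.
(* The [W t == 0] term vanishes outside the null set [W = 0]. *)
rewrite (ae_eq_integral (fun t => (- (W t - b t) * ind ((b t < W t) && (W t < 0))
    + (W t - b t) * ind ((0 < W t) && (W t < b t)) - b t * (ind (W t <= 0) - tau))%:E)).
- by rewrite integral_EFinB // integral_EFinD // b_orth sube0.
- exact: measurableT.
- exact: measurable_int (integrable_EFinB (integrable_EFinD IAB IZ) IC).
- exact: measurable_int (integrable_EFinB IAB IC).
apply: negligibleS W0_null => t /= Zt; apply: contrapT => W0; apply: Zt => _.
by rewrite (negbTE (introN eqP W0)) mulr0 addr0.
Qed.

Lemma integral_rho_tau_sub_le0 :
  (\int[P]_t (rho_tau tau (W t) - rho_tau tau (W t - b t))%:E <= 0)%E.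
Proof.
rewrite integral_rho_tau_sub; apply: adde_le0; apply: integral_EFin_le0 => t.
  by case: (boolP ((b t < W t) && (W t < 0))) => [/andP[]|] /=; rewrite ?mulr1 ?mulr0 //; lra.
by case: (boolP ((0 < W t) && (W t < b t))) => [/andP[]|] /=; rewrite ?mulr1 ?mulr0 //; lra.
Qed.

End expected_check_loss_difference.

Lemma integral_affine_mul_eq0 d (T : measurableType d) (R : realType)
    (mu : {measure set T -> \bar R}) (n : nat) (psi : T -> R) (g : 'I_n -> T -> R)
    (c : R) (delta : 'I_n -> R) :
  mu.-integrable setT (EFin \o psi) ->
  (forall j, mu.-integrable setT (EFin \o (fun t => g j t * psi t))) ->
  (\int[mu]_t (psi t)%:E = 0)%E ->
  (forall j, \int[mu]_t (g j t * psi t)%:E = 0)%E ->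
  (\int[mu]_t ((c + \sum_j delta j * g j t) * psi t)%:E = 0)%E.
Proof.
move=> Ipsi Igpsi psi0 gpsi0.
under eq_integral do rewrite mulrDl mulr_suml; under eq_integral do under eq_bigr do rewrite -mulrA.
rewrite integral_EFinD; last 2 first.
- exact: integrable_EFinZl.
- by apply: integrable_EFin_sum => j; exact: integrable_EFinZl.
rewrite integral_EFinZl // psi0 mule0 add0e integral_EFin_sum => [|j]; last exact: integrable_EFinZl.
by rewrite big1 // => j _; rewrite integral_EFinZl // gpsi0 mule0.
Qed.

Lemma integral_affine_quantile_score d (T : measurableType d) (R : realType)
    (P : probability T R) (n : nat) (W : T -> R) (g : 'I_n -> T -> R)
    (tau c : R) (delta : 'I_n -> R) :
  measurable_fun setT W -> (forall j, P.-integrable setT (EFin \o g j)) ->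
  P [set t | W t <= 0] = tau%:E ->
  (forall j, \int[P]_t (g j t * ind (W t <= 0))%:E = tau%:E * \int[P]_t (g j t)%:E)%E ->
  (\int[P]_t ((c + \sum_j delta j * g j t) * (ind (W t <= 0) - tau))%:E = 0)%E.
Proof.
move=> mW Ig Ptau g_score.
have mWle0 : measurable_fun setT (fun t => W t <= 0).
  by apply: measurable_fun_ler => //; exact: measurable_cst.
have Icst k : P.-integrable setT (EFin \o (fun _ : T => k)).
  exact: finite_measure_integrable_cst.
have Iind : P.-integrable setT (EFin \o (fun t => ind (W t <= 0))).
  rewrite (_ : _ \o _ = EFin \o (fun t => 1 * ind (W t <= 0))).
    exact: integrable_EFin_mul_indic.
  by apply/funext => t /=; rewrite mul1r.
have Igind j : P.-integrable setT (EFin \o (fun t => g j t * ind (W t <= 0))).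
  exact: integrable_EFin_mul_indic.
have Pind : (\int[P]_t (ind (W t <= 0))%:E = tau%:E)%E.
  rewrite -Ptau -[in RHS](setIT [set t | W t <= 0]) -integral_indic //; last first.
    by rewrite -[X in measurable X]setTI; exact: mWle0.
  apply: eq_integral => t _; rewrite indicE; case: (boolP (W t <= 0)) => Wt.
    by rewrite mem_set.
  by rewrite memNset //; exact/negP.
apply: integral_affine_mul_eq0 => [|j||j].
- exact: integrable_EFinB.
- under eq_fun do rewrite mulrBr [g j _ * tau]mulrC.
  by apply: integrable_EFinB => //; exact: integrable_EFinZl.
- rewrite integral_EFinB // Pind.
  have := integral_cst P measurableT tau%:E; rewrite /= probability_setT mule1 => ->.
  by rewrite subee.
under eq_integral do rewrite mulrBr [g j _ * tau]mulrC.
rewrite integral_EFinB //; last exact: integrable_EFinZl.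
rewrite g_score integral_EFinZl // subee // fin_numM //.
exact: (integrable_fin_num measurableT (Ig j)).
Qed.

Lemma leb_null_of_finite_covers (R : realType) (k : nat) (N : set 'cV[R]_k.+1) :
  (forall e : R, 0 < e -> exists s : seq ('cV[R]_k.+1 * 'cV[R]_k.+1),
     [/\ forall p, p \in s -> forall i, p.1 i 0 <= p.2 i 0,
         N `<=` [set y | exists2 p, p \in s & box p.1 p.2 y]
       & \sum_(p <- s) box_vol p.1 p.2 <= e]) ->
  leb_null N.
Proof.
move=> cover e e0; have [s [le_s cov_s vol_s]] := cover e e0.
pose p m := nth (0, 0) s m.
have le_p m i : (p m).1 i 0 <= (p m).2 i 0.
  rewrite /p; case: (ltnP m (size s)) => ms; first exact/le_s/mem_nth.
  by rewrite nth_default //= !mxE.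
exists (fun m => (p m).1), (fun m => (p m).2); split; [by [] | split].
  by move=> y /cov_s [q qs yq]; exists (index q s); rewrite // /p nth_index.
move=> M; pose F m := box_vol (p m).1 (p m).2.
have F_ge0 m : 0 <= F m by apply: prodr_ge0 => i _; rewrite subr_ge0.
have F_out m : (size s <= m)%N -> F m = 0.
  by move=> ms; rewrite /F /p nth_default // /box_vol big_ord_recl !mxE subrr mul0r.
apply: le_trans vol_s.
rewrite (big_nth (0, 0)) big_mkord -(big_mkord xpredT F) -(big_mkord xpredT F).
case: (leqP M (size s)) => Ms.
  by rewrite (big_cat_nat (leq0n M) Ms) /= lerDl; apply: sumr_ge0.
rewrite [leLHS](big_cat_nat (leq0n (size s)) (ltnW Ms)) /=.
by rewrite [X in _ + X]big1_seq ?addr0 // => m /andP[_]; rewrite mem_index_iota => /andP[/F_out].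
Qed.

Lemma grid_cell (R : realType) (K : nat) (h x : R) :
  0 < h -> 0 <= x <= K.+1%:R * h -> exists m : 'I_K.+1, m%:R * h <= x <= m%:R * h + h.
Proof.
move=> h0 /andP[x0 xK]; pose q := Num.truncn (x / h).
have qx : q%:R * h <= x by rewrite -ler_pdivlMr // truncn_le divr_ge0 // ltW.
have xq : x < q.+1%:R * h by rewrite -ltr_pdivrMr // truncnS_gt.
exists (inord (minn K q)); rewrite inordK ?ltnS ?geq_minl //.
case: (leqP K q) => Kq.
  apply/andP; split; last by rewrite -[X in _ + X]mul1r -mulrDl natr1.
  by apply: le_trans qx; rewrite ler_wpM2r ?ler_nat // ltW.
by rewrite qx /= -[X in _ + X]mul1r -mulrDl natr1 ltW.
Qed.

Section hyperplane_null.
Variables (R : realType) (n : nat) (r : 'rV[R]_n.+1) (a : R) (i : 'I_n.+1).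
Hypothesis ri0 : r 0 i != 0.

Let slope := (\sum_j `|r 0 j|) / `|r 0 i|.

Let slope_ge0 : 0 <= slope.
Proof. by rewrite divr_ge0 // sumr_ge0. Qed.

Let solve (lo : 'I_n -> R) := (a - \sum_j r 0 (lift i j) * lo j) / r 0 i.

Let solve_near (y : 'cV[R]_n.+1) (lo : 'I_n -> R) (h : R) :
  (r *m y) 0 0 = a -> 0 <= h -> (forall j, `|y (lift i j) 0 - lo j| <= h) ->
  `|solve lo - y i 0| <= h * slope.
Proof.
move=> ya h0 near.
have a_split : a = r 0 i * y i 0 + \sum_j r 0 (lift i j) * y (lift i j) 0.
  by rewrite -ya mxE (bigD1_ord i) //=; under eq_bigr do rewrite mxE.
have -> : solve lo - y i 0 = (\sum_j r 0 (lift i j) * (y (lift i j) 0 - lo j)) / r 0 i.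
  rewrite /solve a_split; under [in RHS]eq_bigr do rewrite mulrBr.
  by rewrite sumrB; field.
rewrite normrM normfV /slope mulrA ler_wpM2r // (bigD1_ord i) //= mulrDr.
apply: le_trans (ler_norm_sum _ _ _) _; rewrite mulr_sumr.
rewrite -[leLHS]add0r; apply: lerD; first by rewrite mulr_ge0.
by apply: ler_sum => j _; rewrite normrM mulrC ler_wpM2r.
Qed.

(* Grid the coordinates other than [i] into cells of side [h]: over a cell, the
   hyperplane moves coordinate [i] by at most [h * slope], so the cover has
   volume O(h). *)
Lemma leb_null_hyperplane_bounded (N : R) : 0 < N ->
  leb_null [set y : 'cV[R]_n.+1 | (r *m y) 0 0 = a /\ forall j, `|y j 0| <= N].
Proof.
move=> N0; apply: leb_null_of_finite_covers => e e0.
pose K := Num.truncn ((2 * N) ^+ n.+1 * (2 * slope) / e).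
pose h := 2 * N / K.+1%:R.
have h0 : 0 < h by rewrite divr_gt0 // mulr_gt0.
have hK : K.+1%:R * h = 2 * N by rewrite mulrC divfK // pnatr_eq0.
pose lo (f : {ffun 'I_n -> 'I_K.+1}) j := - N + (f j)%:R * h.
pose cell f := (\col_j (if unlift i j is Some j' then lo f j' else solve (lo f) - h * slope),
                \col_j (if unlift i j is Some j' then lo f j' + h else solve (lo f) + h * slope)).
have hS0 : 0 <= h * slope by rewrite mulr_ge0 // ltW.
exists [seq cell f | f <- enum {ffun 'I_n -> 'I_K.+1}]; split.
- move=> _ /mapP[f _ ->] j; rewrite !mxE; case: unliftP => [j'|] _ /=.
    by rewrite lerDl ltW.
  by rewrite lerD2l; lra.
- move=> y [ya yN].
  have cellP j : exists m : 'I_K.+1,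
      m%:R * h <= y (lift i j) 0 + N <= m%:R * h + h.
    by apply: grid_cell; rewrite // hK; move: (yN (lift i j)); rewrite ler_norml; lra.
  pose f := [ffun j => xchoose (cellP j)].
  have lo_le j : lo f j <= y (lift i j) 0 <= lo f j + h.
    by have := xchooseP (cellP j); rewrite /lo ffunE; lra.
  exists (cell f); first by apply: map_f; rewrite mem_enum.
  move=> j; rewrite !mxE; case: unliftP => [j'|] -> //.
  rewrite -ler_distlC; apply: solve_near => // [|j']; first exact: ltW.
  by rewrite ler_distlC; have := lo_le j'; lra.
- rewrite big_map big_enum /=.
  have vol f : box_vol (cell f).1 (cell f).2 = h ^+ n * (2 * h * slope).
    rewrite /box_vol (bigD1_ord i) //= !mxE unlift_none mulrC.
    under eq_bigr do rewrite !mxE liftK addrAC subrr add0r.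
    by rewrite prodr_const card_ord; ring.
  under eq_bigr do rewrite vol.
  rewrite sumr_const card_ffun !card_ord -(mulr_natl (h ^+ n * _)) natrX mulrA -exprMn hK.
  have -> : (2 * N) ^+ n * (2 * h * slope) = (2 * N) ^+ n.+1 * (2 * slope) / K.+1%:R.
    by rewrite /h exprS; field.
  by rewrite ler_pdivrMr // [leRHS]mulrC -ler_pdivrMr // ltW // truncnS_gt.
Qed.
End hyperplane_null.

Lemma leb_null_hyperplane (R : realType) (n : nat) (r : 'rV[R]_n.+1) (a N : R) :
  r != 0 -> 0 < N ->
  leb_null [set y : 'cV[R]_n.+1 | (r *m y) 0 0 = a /\ forall j, `|y j 0| <= N].
Proof.
move=> r0; have [i ri0] : exists i, r 0 i != 0.
  apply/existsP; apply: contraR r0 => /existsPn r0.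
  by apply/eqP/matrixP => k i; rewrite ord1 mxE; apply/eqP/negPn/r0.
by move=> N0; exact: (leb_null_hyperplane_bounded a ri0 N0).
Qed.

Section linear_forms.
Context d (T : measurableType d) (R : realType) (P : probability T R).
Variables (n : nat) (Y : T -> 'cV[R]_n.+1).

Lemma integrable_linear_form (r : 'rV[R]_n.+1) :
  (forall i, P.-integrable setT (fun t => (Y t i 0)%:E)) ->
  P.-integrable setT (EFin \o (fun t => (r *m Y t) 0 0)).
Proof.
move=> Yint; rewrite (_ : (fun t => _) = fun t => \sum_i r 0 i * Y t i 0).
  by apply: integrable_EFin_sum => i; apply: integrable_EFinZl; exact: Yint.
by apply/funext => t; rewrite mxE.
Qed.

Lemma negligible_linear_form_level (r : 'rV[R]_n.+1) (a : R) :
  law_abs_cont P Y -> r != 0 -> P.-negligible [set t | (r *m Y t) 0 0 = a].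
Proof.
move=> Yac r0; pose H m := [set y : 'cV[R]_n.+1 | (r *m y) 0 0 = a /\ forall j, `|y j 0| <= m.+1%:R].
apply: (@negligibleS _ _ _ _ (\bigcup_m (Y @^-1` H m))); last first.
  by apply: negligible_bigcup => m; apply/Yac/leb_null_hyperplane.
move=> t /= Yt; exists (Num.truncn (\sum_j `|Y t j 0|)) => //; split => // j.
apply: le_trans (ltW (truncnS_gt _)).
by rewrite (bigD1 j) //= lerDl sumr_ge0.
Qed.

Lemma linear_form_neq0 (r : 'rV[R]_n.+1) (a tau : R) : 0 < tau < 1 ->
  P [set t | (r *m Y t) 0 0 - a <= 0] = tau%:E -> r != 0.
Proof.
move=> /andP[tau0 tau1] Ptau; apply/eqP => r0; move: Ptau; rewrite r0.
under eq_set do rewrite mul0mx mxE sub0r.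
case: (lerP (- a) 0) => _.
  have -> : [set _ : T | true] = setT by apply/seteqP.
  by rewrite probability_setT => -[tau_eq1]; move: tau1; rewrite tau_eq1 ltxx.
have -> : [set _ : T | false] = set0 by apply/seteqP; split => t.
by rewrite measure0 => -[tau_eq0]; move: tau0; rewrite tau_eq0 ltxx.
Qed.
End linear_forms.

Theorem lemma2 (d : measure_display) (T : measurableType d) (R : realType)
  (P : probability T R) (n : nat) (Y : T -> 'cV[R]_n.+1)
  (tau : R) (u : 'cV[R]_n.+1) (Gam : 'M[R]_(n.+1, n))
  (alpha0 : R) (beta0 : 'cV[R]_n) (sigma alpha : R) (beta : 'cV[R]_n) :
  0 < tau < 1 ->
  (u^T *m u) 0 0 = 1 ->
  (row_mx u Gam)^T *m (row_mx u Gam) = 1%:M ->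
  (forall i : 'I_n.+1, measurable_fun setT (fun t => Y t i 0)) ->
  law_abs_cont P Y ->
  connected (law_support P Y) ->
  (forall i : 'I_n.+1, P.-integrable setT (fun t => (Y t i 0)%:E)) ->
  P [set t | W_fun u Gam alpha0 beta0 (Y t) <= 0] = tau%:E ->
  (forall j : 'I_n,
     (\int[P]_t ((Yperp Gam (Y t)) j 0
                 * ((W_fun u Gam alpha0 beta0 (Y t) <= 0)%R : bool)%:R)%:E
      = tau%:E * \int[P]_t ((Yperp Gam (Y t)) j 0)%:E)%E) ->
  0 < sigma ->
  let W t := W_fun u Gam alpha0 beta0 (Y t) in
  let b t := b_fun Gam alpha alpha0 beta beta0 (Y t) in
  let L t := ln (f_tau tau u Gam (Y t) alpha beta sigma
                 / f_tau tau u Gam (Y t) alpha0 beta0 sigma) in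
  (\int[P]_t (L t)%:E <= 0)%E /\
  (sigma%:E * \int[P]_t (L t)%:E
   = \int[P]_t (- (W t - b t) * (((b t < W t) && (W t < 0))%R : bool)%:R)%:E
     + \int[P]_t ((W t - b t) * (((0 < W t) && (W t < b t))%R : bool)%:R)%:E)%E.
Proof.
move=> tau01 _ _ _ Yac _ Yint PW0 Yperp_score sigma0 W b L.
have Icst k : P.-integrable setT (EFin \o (fun _ : T => k)).
  exact: finite_measure_integrable_cst.
have IW : P.-integrable setT (EFin \o W).
  by apply: integrable_EFinB => //; exact: integrable_linear_form.
have IYperp j : P.-integrable setT (EFin \o (fun t => Yperp Gam (Y t) j 0)).
  by rewrite (funext (fun t => Yperp_row Gam (Y t) j)); exact: integrable_linear_form.
have Ib : P.-integrable setT (EFin \o b).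
  rewrite /b (funext (fun t => b_fun_Yperp Gam alpha alpha0 beta beta0 (Y t))).
  by apply: integrable_EFinD => //; apply: integrable_EFin_sum => j; exact: integrable_EFinZl.
have W0 : P.-negligible [set t | W t = 0].
  apply: negligibleS (negligible_linear_form_level alpha0 Yac (linear_form_neq0 tau01 PW0)).
  by move=> t /= /eqP; rewrite subr_eq0 => /eqP.
have b_orth : (\int[P]_t (b t * (ind (W t <= 0) - tau))%:E = 0)%E.
  under eq_integral do rewrite /b b_fun_Yperp.
  apply: integral_affine_quantile_score IYperp PW0 Yperp_score.
  exact/measurable_EFinP/(measurable_int P).
have EL : (\int[P]_t (L t)%:E =
    sigma^-1%:E * \int[P]_t (rho_tau tau (W t) - rho_tau tau (W t - b t))%:E)%E.
  under eq_integral do rewrite /L ln_f_tau_ratio // mulrC.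
  by rewrite integral_EFinZl //; exact: integrable_rho_tau_sub.
split.
  rewrite EL; apply: mule_ge0_le0; first by rewrite lee_fin invr_ge0 ltW.
  exact: integral_rho_tau_sub_le0 IW Ib W0 b_orth.
rewrite EL muleA -EFinM mulfV ?gt_eqF // mul1e.
exact: integral_rho_tau_sub IW Ib W0 b_orth.
Qed.
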